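(* Let $c,d>0$ with $\frac{cd}{c+d}\le1$. Then $\frac12F\!\left(c,d;c+d;\frac12\right)<1$.
   Context: $F(a,b;c;x)$ is the Gaussian hypergeometric function $\sum_{n\ge0}\frac{(a)_n(b)_n}{(c)_n}\frac{x^n}{n!}$ ($|x|<1$), with $(a)_n=a(a+1)\cdots(a+n-1)$, $(a)_0=1$. *)

From Stdlib Require Import Reals.
Open Scope R_scope.

Fixpoint poch (a : R) (n : nat) : R :=
  match n with
  | O => 1
  | S k => poch a k * (a + INR k)
  end.

Definition hyp_term (a b c x : R) (n : nat) : R :=
  poch a n * poch b n / poch c n * x ^ n / INR (Factorial.fact n).

Definition hyp_F_is (a b c x l : R) : Prop :=
  infinite_sum (hyp_term a b c x) l.

From Stdlib Require Import Reals Lra Lia.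
Open Scope R_scope.

(* Write t_n for the n-th term of F(c,d;c+d;1/2).  The ratio
   t_{n+1}/t_n equals (c+n)(d+n) / (2 (c+d+n)(n+1)), and the hypothesis
   cd <= c+d (equivalent to cd/(c+d) <= 1) makes (c+n)(d+n) <= (c+d+n)(n+1),
   strictly as soon as n >= 1.  Hence t_{n+1} <= t_n / 2 for every n, with
   strict inequality from n = 1 on.

   A nonnegative "halving" sequence has a summable series, and the quantity
   S_n + t_n (partial sum plus last term) is nonincreasing in n and bounds
   the sum of the series; a strict halving step makes it drop strictly.
   Since S_0 + t_0 = 2 t_0 = 2, the sum is at most S_2 + t_2 < 2, i.e.
   (1/2) F(c,d;c+d;1/2) < 1. *)

Lemma cv_le_upper_bound (u : nat -> R) (l B : R) :
  Un_cv u l -> (forall n, u n <= B) -> l <= B.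
Proof.
  intros Hu HB.
  apply (Rle_cv_lim (Vn := fun _ => B) HB Hu).
  intros eps Heps; exists 0%nat; intros n _.
  unfold Rdist; rewrite Rminus_diag, Rabs_R0; exact Heps.
Qed.

Section HalvingSeries.

Variable t : nat -> R.
Hypothesis t_nonneg : forall n, 0 <= t n.
Hypothesis t_halving : forall n, t (S n) <= t n / 2.

(* Partial sum up to index n plus the last term: since the remaining tail
   is at most t n, this bounds the sum of the whole series. *)
Definition sum_with_last (n : nat) : R := sum_f_R0 t n + t n.

Lemma sum_with_last_succ (n : nat) :
  sum_with_last (S n) = sum_with_last n + (2 * t (S n) - t n).
Proof. unfold sum_with_last; simpl; ring. Qed.

Lemma sum_with_last_antitone (m n : nat) :
  (m <= n)%nat -> sum_with_last n <= sum_with_last m.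
Proof.
  induction 1 as [|n _ IH]; [lra|].
  rewrite sum_with_last_succ; pose proof (t_halving n); lra.
Qed.

Lemma partial_sums_growing : Un_growing (sum_f_R0 t).
Proof. intro n; simpl; pose proof (t_nonneg (S n)); lra. Qed.

Lemma partial_sum_le_sum_with_last (m n : nat) :
  sum_f_R0 t n <= sum_with_last m.
Proof.
  destruct (Nat.le_gt_cases m n) as [Hmn | Hnm].
  - pose proof (sum_with_last_antitone m n Hmn); pose proof (t_nonneg n).
    unfold sum_with_last in *; lra.
  - pose proof (growing_prop _ m n partial_sums_growing ltac:(lia)).
    pose proof (t_nonneg m); unfold sum_with_last in *; lra.
Qed.

Lemma halving_series_sum :
  exists l, infinite_sum t l /\ forall m, l <= sum_with_last m.
Proof.
  assert (Hub : has_ub (sum_f_R0 t)).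
  { exists (sum_with_last 0); intros x [n ->]; apply partial_sum_le_sum_with_last. }
  destruct (growing_cv _ partial_sums_growing Hub) as [l Hl].
  exists l; split; [exact Hl |].
  intro m; apply (cv_le_upper_bound _ _ _ Hl), partial_sum_le_sum_with_last.
Qed.

End HalvingSeries.

Lemma poch_pos (a : R) (n : nat) : 0 < a -> 0 < poch a n.
Proof.
  intro Ha; induction n as [|n IH]; simpl; [lra|].
  pose proof (pos_INR n); apply Rmult_lt_0_compat; lra.
Qed.

Lemma hyp_term_pos (a b c x : R) (n : nat) :
  0 < a -> 0 < b -> 0 < c -> 0 < x -> 0 < hyp_term a b c x n.
Proof.
  intros Ha Hb Hc Hx; unfold hyp_term, Rdiv.
  pose proof (poch_pos a n Ha); pose proof (poch_pos b n Hb).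
  pose proof (poch_pos c n Hc); pose proof (INR_fact_lt_0 n).
  pose proof (pow_lt x n Hx).
  repeat apply Rmult_lt_0_compat; auto; apply Rinv_0_lt_compat; auto.
Qed.

Lemma hyp_term_succ (a b c x : R) (n : nat) : 0 < c ->
  hyp_term a b c x (S n) =
  hyp_term a b c x n * ((a + INR n) * (b + INR n) / ((c + INR n) * (INR n + 1)) * x).
Proof.
  intro Hc; unfold hyp_term.
  pose proof (poch_pos c n Hc); pose proof (pos_INR n); pose proof (INR_fact_lt_0 n).
  rewrite fact_simpl, mult_INR, S_INR; simpl poch; simpl pow.
  field; repeat split; lra.
Qed.

(* The key inequality: (a+n)(b+n) = (a+b+n)(n+1) - (a+b-ab) - n. *)
Lemma ratio_numerator_le (a b : R) (n : nat) :
  a * b <= a + b -> (a + INR n) * (b + INR n) <= (a + b + INR n) * (INR n + 1) - INR n.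
Proof. intro Hab; nra. Qed.

Lemma hyp_term_halving (a b : R) (n : nat) :
  0 < a -> 0 < b -> a * b <= a + b ->
  hyp_term a b (a + b) (1/2) (S n) <= hyp_term a b (a + b) (1/2) n / 2
  /\ ((1 <= n)%nat ->
      hyp_term a b (a + b) (1/2) (S n) < hyp_term a b (a + b) (1/2) n / 2).
Proof.
  intros Ha Hb Hab.
  pose proof (hyp_term_pos a b (a + b) (1/2) n Ha Hb ltac:(lra) ltac:(lra)) as Ht.
  pose proof (ratio_numerator_le a b n Hab) as Hnum; pose proof (pos_INR n).
  assert (Hden : 0 < (a + b + INR n) * (INR n + 1)) by (apply Rmult_lt_0_compat; lra).
  set (r := (a + INR n) * (b + INR n) / ((a + b + INR n) * (INR n + 1))).
  assert (Hr : r * ((a + b + INR n) * (INR n + 1)) = (a + INR n) * (b + INR n))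
    by (unfold r; field; lra).
  rewrite hyp_term_succ by lra; fold r; split.
  - assert (r <= 1) by nra; nra.
  - intro Hn; pose proof (le_INR 1 n Hn); simpl INR in *.
    assert (r < 1) by nra; nra.
Qed.

Theorem mainTheorem7 (c d : R) (hc : 0 < c) (hd : 0 < d)
  (hcd : c * d / (c + d) <= 1) :
  exists l : R, hyp_F_is c d (c + d) (1/2) l /\ (1/2) * l < 1.
Proof.
  set (t := hyp_term c d (c + d) (1/2)).
  assert (Hcd : c * d <= c + d).
  { apply (Rmult_le_compat_r (c + d)) in hcd; [|lra].
    unfold Rdiv in hcd; rewrite Rmult_assoc, Rinv_l in hcd; lra. }
  assert (Hnonneg : forall n, 0 <= t n)
    by (intro n; left; apply hyp_term_pos; lra).
  assert (Hhalf : forall n, t (S n) <= t n / 2)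
    by (intro n; apply hyp_term_halving; assumption).
  destruct (halving_series_sum t Hnonneg Hhalf) as [l [Hl Hle]].
  exists l; split; [exact Hl |].
  assert (Hstart : sum_with_last t 0 = 2)
    by (unfold sum_with_last, t, hyp_term; simpl; field).
  assert (Hdrop : sum_with_last t 2 < sum_with_last t 1).
  { assert (Hstrict : t 2%nat < t 1%nat / 2)
      by exact (proj2 (hyp_term_halving c d 1 hc hd Hcd) (le_n 1)).
    rewrite sum_with_last_succ; lra. }
  pose proof (Hle 2%nat); pose proof (sum_with_last_antitone t Hhalf 0 1 ltac:(lia)).
  lra.
Qed.
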